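(* Let $x_1, \ldots, x_n, y \in \mathcal{X}$ and $k \in \mathbb{N}$. If $t = \operatorname{imax}(\operatorname{imax}(\cdots\operatorname{imax}(s^k(y), x_1)\cdots, x_{n-1}), x_n)$, then \[ t =_{\mathcal{L}} \max\big(A(\emptyset, x_n, 0), A(\{x_n\}, x_{n-1}, 0), \ldots, A(\{x_2, \ldots, x_n\}, x_1, 0), A(\{x_1, \ldots, x_n\}, y, k)\big), \] where the generic term is $A(\{x_{i+1},\ldots,x_n\}, x_i, 0)$ for $i = n, n-1, \ldots, 1$. If $t = \operatorname{imax}(\operatorname{imax}(\cdots\operatorname{imax}(s^k(0), x_1)\cdots, x_{n-1}), x_n)$, then \[ t =_{\mathcal{L}} \max\big(A(\emptyset, x_n, 0), A(\{x_n\}, x_{n-1}, 0), \ldots, A(\{x_2, \ldots, x_n\}, x_1, 0), B(\{x_1, \ldots, x_n\}, k)\big). \]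
   Context: $\operatorname{imax}\colon \mathbb{N}\times\mathbb{N}\to\mathbb{N}$ is defined by $\operatorname{imax}(i,0)=0$ and $\operatorname{imax}(i,j+1)=\max(i,j+1)$. Levels are terms of the grammar $t ::= x \mid 0 \mid s(t) \mid \max(t,t) \mid \operatorname{imax}(t,t)$, with $x$ in a countable set of variables $\mathcal{X}$; $s^k$ is $k$ applications of $s$. A valuation is a function $\sigma\colon\mathcal{X}\to\mathbb{N}$; values are defined by $[0]_\sigma=0$, $[x]_\sigma=\sigma(x)$, $[s(t)]_\sigma=[t]_\sigma+1$, $[\max(t_1,t_2)]_\sigma=\max([t_1]_\sigma,[t_2]_\sigma)$, $[\operatorname{imax}(t_1,t_2)]_\sigma=\operatorname{imax}([t_1]_\sigma,[t_2]_\sigma)$. Sublevel symbols: for a finite $E \subseteq \mathcal{X}$, $x \in \mathcal{X}$, $S \in \mathbb{N}$, $A(E, x, S)$ and $B(E, S)$ have values $[A(E,x,S)]_\sigma = 0$ if some $y \in E$ has $\sigma(y)=0$, and $\sigma(x)+S$ otherwise; $[B(E,S)]_\sigma = 0$ if some $y\in E$ has $\sigma(y)=0$, and $S$ otherwise. Maxima of such expressions are evaluated pointwise. Two expressions $t_1,t_2$ satisfy $t_1 =_{\mathcal{L}} t_2$ if $[t_1]_\sigma=[t_2]_\sigma$ for all valuations $\sigma$. *)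

From mathcomp Require Import all_boot.
Set Implicit Arguments. Unset Strict Implicit. Unset Printing Implicit Defensive.

Definition imax (i j : nat) : nat := if j is 0 then 0 else maxn i j.

Inductive level : Type :=
| LVar of nat
| LZero
| LSucc of level
| LMax of level & level
| LImax of level & level.

Fixpoint leval (sigma : nat -> nat) (t : level) : nat :=
  match t with
  | LVar x => sigma x
  | LZero => 0
  | LSucc u => (leval sigma u).+1
  | LMax u v => maxn (leval sigma u) (leval sigma v)
  | LImax u v => imax (leval sigma u) (leval sigma v)
  end.

Definition lsuccn (k : nat) (t : level) : level := iter k LSucc t.

(* Sublevel symbols A(E, x, S) and B(E, S); E a finite set of variables,
   represented by a list (only membership matters). *)
Inductive sublevel : Type :=
| SubA of seq nat & nat & nat
| SubB of seq nat & nat.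

Definition some_zero (sigma : nat -> nat) (E : seq nat) : bool :=
  has (fun y => sigma y == 0) E.

Definition sub_eval (sigma : nat -> nat) (a : sublevel) : nat :=
  match a with
  | SubA E x m => if some_zero sigma E then 0 else sigma x + m
  | SubB E m => if some_zero sigma E then 0 else m
  end.

Definition submax_eval (sigma : nat -> nat) (l : seq sublevel) : nat :=
  \max_(a <- l) sub_eval sigma a.

Definition level_eq_submax (t : level) (l : seq sublevel) : Prop :=
  forall sigma : nat -> nat, leval sigma t = submax_eval sigma l.

Definition imax_chain (base : level) (xs : seq nat) : level :=
  foldl (fun acc x => LImax acc (LVar x)) base xs.

(* Indices are
   1-based here: x_i = nth 0 xs i.-1 and {x_{i+1},...,x_n} = drop i xs. *)
Definition A_prefix (xs : seq nat) : seq sublevel :=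
  [seq SubA (drop i xs) (nth 0 xs i.-1) 0 | i <- rev (iota 1 (size xs))].

(* Induction on the chain, peeling off the outermost variable x: the value
   of imax(t, x) is 0 when sigma(x) = 0 and max(sigma(x), t) otherwise.  The
   first case is obtained by adding x to the guard set E of every sublevel
   symbol describing t, the second by the new symbol A(emptyset, x, 0). *)
From mathcomp Require Import all_boot.

Definition guard_sublevel (x : nat) (a : sublevel) : sublevel :=
  match a with
  | SubA E z m => SubA (rcons E x) z m
  | SubB E m => SubB (rcons E x) m
  end.

Lemma sub_eval_guard sigma x a :
  sub_eval sigma (guard_sublevel x a) =
  if sigma x == 0 then 0 else sub_eval sigma a.
Proof.
by case: a => [E z m|E m] /=; rewrite /some_zero has_rcons; case: eqP.
Qed.

Lemma submax_eval_cons sigma a l :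
  submax_eval sigma (a :: l) = maxn (sub_eval sigma a) (submax_eval sigma l).
Proof. exact: big_cons. Qed.

Lemma submax_eval_guard sigma x l :
  submax_eval sigma (map (guard_sublevel x) l) =
  if sigma x == 0 then 0 else submax_eval sigma l.
Proof.
rewrite /submax_eval big_map.
under eq_bigr do rewrite sub_eval_guard.
by case: eqP => _; [rewrite big1 | apply: eq_bigr].
Qed.

Lemma leval_imax_var sigma t x :
  leval sigma (LImax t (LVar x)) =
  if sigma x == 0 then 0 else maxn (sigma x) (leval sigma t).
Proof. by rewrite /= /imax maxnC; case: (sigma x). Qed.

Lemma leval_lsuccn sigma k t : leval sigma (lsuccn k t) = leval sigma t + k.
Proof. by elim: k => [|k IHk] /=; rewrite ?addn0 ?addnS ?IHk. Qed.

Lemma A_prefix_rcons xs x :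
  A_prefix (rcons xs x) =
  SubA [::] x 0 :: map (guard_sublevel x) (A_prefix xs).
Proof.
rewrite /A_prefix size_rcons -(addn1 (size xs)) iotaD rev_cat /= add1n.
rewrite drop_oversize ?size_rcons // nth_rcons ltnn eqxx -map_comp.
congr (_ :: _); apply/eq_in_map => -[|i]; rewrite mem_rev mem_iota //= add1n ltnS.
by move=> lt_i_xs; rewrite drop_rcons // nth_rcons lt_i_xs.
Qed.

Section ImaxChain.

Variables (base : level) (last_symbol : seq nat -> sublevel).

Hypothesis last_symbol_rcons :
  forall E x, last_symbol (rcons E x) = guard_sublevel x (last_symbol E).
Hypothesis leval_base :
  forall sigma, leval sigma base = sub_eval sigma (last_symbol [::]).

Lemma leval_imax_chain xs :
  level_eq_submax (imax_chain base xs) (rcons (A_prefix xs) (last_symbol xs)).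
Proof.
move=> sigma; elim/last_ind: xs => [|xs x IHxs].
  by rewrite /submax_eval big_seq1 leval_base.
rewrite /imax_chain foldl_rcons -/(imax_chain _ _) leval_imax_var IHxs.
rewrite A_prefix_rcons last_symbol_rcons rcons_cons -map_rcons.
rewrite submax_eval_cons submax_eval_guard /= addn0.
by case: eqP.
Qed.

End ImaxChain.

Theorem proposition22 (xs : seq nat) (y k : nat) :
  0 < size xs ->
  level_eq_submax (imax_chain (lsuccn k (LVar y)) xs)
                  (rcons (A_prefix xs) (SubA xs y k)) /\
  level_eq_submax (imax_chain (lsuccn k LZero) xs)
                  (rcons (A_prefix xs) (SubB xs k)).
Proof.
(* The identity also holds for [xs = [::]]. *)
move=> _; split.
- by apply: (@leval_imax_chain _ (fun E => SubA E y k)) => // sigma;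
    rewrite leval_lsuccn.
- by apply: (@leval_imax_chain _ (fun E => SubB E k)) => // sigma;
    rewrite leval_lsuccn.
Qed.
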